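(* For every integer $n\ge 2$ and every $L=2^n+k$ with $0\le k<2^n$, $$\mathcal{C}(L+1)-\mathcal{C}(L)=\begin{cases}3, & 0\le k<2^{n-1},\\ 2, & 2^{n-1}\le k<2^n.\end{cases}$$
   Context: Let $\mathcal{A}=\{a,x,y,z\}$ and let $\tau$ be the substitution (monoid morphism on finite words over $\mathcal{A}$) defined by $\tau(a)=axa$, $\tau(x)=y$, $\tau(y)=z$, $\tau(z)=x$. For a finite word $w$, $\mathrm{Sub}(w)$ denotes the set of finite (contiguous) subwords of $w$. Let $\mathrm{Sub}_\tau=\bigcup_{s\in\mathcal{A},\,n\in\mathbb{N}\cup\{0\}}\mathrm{Sub}(\tau^n(s))$. The word complexity is $\mathcal{C}(L)=$ the number of elements of $\mathrm{Sub}_\tau$ of length $L$. *)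

From HB Require Import structures.
From mathcomp Require Import all_boot.
From Stdlib Require Import ClassicalDescription.
Set Implicit Arguments. Unset Strict Implicit. Unset Printing Implicit Defensive.

Inductive letter := La | Lx | Ly | Lz.

Definition letter_code (l : letter) : 'I_4 :=
  match l with La => inord 0 | Lx => inord 1 | Ly => inord 2 | Lz => inord 3 end.
Definition letter_decode (i : 'I_4) : letter :=
  match val i with 0 => La | 1 => Lx | 2 => Ly | _ => Lz end.
Lemma letter_codeK : cancel letter_code letter_decode.
Proof. by case; rewrite /letter_decode /= inordK. Qed.
HB.instance Definition _ := Finite.copy letter (can_type letter_codeK).

Definition tau_letter (l : letter) : seq letter :=
  match l with
  | La => [:: La; Lx; La]
  | Lx => [:: Ly]
  | Ly => [:: Lz]
  | Lz => [:: Lx]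
  end.
Definition tau (w : seq letter) : seq letter := flatten (map tau_letter w).

Definition in_Sub_tau (u : seq letter) : Prop :=
  exists (s : letter) (n : nat), infix u (iter n tau [:: s]).

Definition decP (P : Prop) : bool :=
  if excluded_middle_informative P then true else false.

Definition complexity (L : nat) : nat :=
  #|[set t : L.-tuple letter | decP (in_Sub_tau (val t))]|.

From Pilot Require Import Defs.
From mathcomp Require Import all_boot zify.
From Stdlib Require Import ClassicalDescription.
Set Implicit Arguments. Unset Strict Implicit. Unset Printing Implicit Defensive.

(* The language of [tau] is the set of factors of the fixed point [u = tau^oo(a)],
   which satisfies [u(2q) = a] and [u(2q+1) = rot (u q)] with [rot] cycling x, y, z
   and sending a to x.  A factor of length [L] starting at an even position is
   determined by its odd-indexed letters, which form a factor of [rot o u] of length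
   [L/2]; one starting at an odd position by its even-indexed letters, a factor of
   [rot o u] of length [ceil(L/2)].  For length at least 3 the factors of [rot o u]
   still determine the parity of their position, hence are in bijection with those
   of [u].  So [C L = C (L/2) + C (ceil(L/2))] for [L >= 6], which gives
   [C (L+1) - C L = C (L/2 + 1) - C (L/2)], and the theorem follows by induction
   on [n] from the values [C 3, ..., C 8 = 8, 10, 13, 16, 18, 20]. *)

Lemma decPP (P : Prop) : reflect P (Defs.decP P).
Proof. by rewrite /Defs.decP; case: excluded_middle_informative => h; constructor. Qed.

Definition factor_of (v : nat -> letter) (w : seq letter) : Prop :=
  exists p, forall i, i < size w -> nth La w i = v (p + i).

Lemma factor_of_infix v w s : infix w s -> factor_of v s -> factor_of v w.
Proof.
move=> /infixP [s1 [s2 ->]] [p hp]; exists (p + size s1) => i hi.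
have := hp (size s1 + i).
rewrite !size_cat nth_cat [_ + _ < size s1]ltnNge leq_addr /= addKn nth_cat hi.
by move=> ->; rewrite ?addnA //; lia.
Qed.

Lemma factor_of_letter v c : (exists p, v p = c) -> factor_of v [:: c].
Proof. by case=> p hp; exists p; case=> // _; rewrite addn0. Qed.

Definition tuple_of_fun L (f : nat -> letter) : L.-tuple letter := [tuple f i | i < L].

Lemma nth_tuple_of_fun L f i : i < L -> nth La (tuple_of_fun L f) i = f i.
Proof. by move=> hi; rewrite (nth_mktuple _ _ (Ordinal hi)). Qed.

Definition window (v : nat -> letter) (L p : nat) : L.-tuple letter :=
  tuple_of_fun L (fun i => v (p + i)).

Lemma nth_window v L p i : i < L -> nth La (window v L p) i = v (p + i).
Proof. exact: nth_tuple_of_fun. Qed.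

Lemma windowP v L p (t : L.-tuple letter) :
  t = window v L p <-> forall i, i < L -> nth La t i = v (p + i).
Proof.
split=> [-> i hi | ht]; first exact: nth_window.
apply: eq_from_tnth => i; rewrite !(tnth_nth La) nth_window //; exact: ht.
Qed.

Lemma eq_window v v' L p q :
  window v L p = window v' L q <-> forall i, i < L -> v (p + i) = v' (q + i).
Proof.
rewrite windowP; split=> h i hi; rewrite -?h ?nth_window //; exact: h.
Qed.

Definition windows_at (v : nat -> letter) (P : pred nat) (L : nat) : {set L.-tuple letter} :=
  [set t | Defs.decP (exists2 p, P p & t = window v L p)].

Lemma windows_atP v (P : pred nat) L t :
  reflect (exists2 p, P p & t = window v L p) (t \in windows_at v P L).
Proof. by rewrite inE; apply: decPP. Qed.

Lemma card_windows_at_map (v v' : nat -> letter) (P Q : pred nat) L L'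
    (F : L.-tuple letter -> L'.-tuple letter) (h : nat -> nat) :
  (forall p, P p -> F (window v L p) = window v' L' (h p)) ->
  (forall p, P p -> Q (h p)) ->
  (forall q, Q q -> exists2 p, P p & h p = q) ->
  (forall p q, P p -> P q -> window v' L' (h p) = window v' L' (h q) ->
                            window v L p = window v L q) ->
  #|windows_at v P L| = #|windows_at v' Q L'|.
Proof.
move=> hF hPQ hQP hinj; have -> : windows_at v' Q L' = F @: windows_at v P L.
  apply/setP=> t; apply/windows_atP/imsetP => [[q /hQP [p hp <-] ->] | [s]].
    by exists (window v L p); [apply/windows_atP; exists p | rewrite hF].
  by case/windows_atP=> p hp -> ->; exists (h p); rewrite ?hF ?hPQ.
rewrite card_in_imset // => s1 s2 /windows_atP [p hp ->] /windows_atP [q hq ->].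
by rewrite !hF //; apply: hinj.
Qed.

Definition rot (c : letter) : letter :=
  match c with La => Lx | Lx => Ly | Ly => Lz | Lz => Lx end.

Lemma rot_neq_a c : rot c != La. Proof. by apply/eqP; case: c. Qed.

Lemma rot_inj c d : c != La -> d != La -> rot c = rot d -> c = d.
Proof. by case: c; case: d; rewrite ?eqxx. Qed.

Lemma rot_eq_x c : c != La -> rot c = Lx -> c = Lz.
Proof. by case: c; rewrite ?eqxx. Qed.

Lemma rot_eq_z c : rot c = Lz -> c = Ly.
Proof. by case: c. Qed.

(* The fixed point of [tau] starting with [a]: its [i]-th letter is given by the
   2-adic valuation of [i + 1]. *)
Definition tau_inf (i : nat) : letter := iter (logn 2 i.+1) rot La.

Lemma tau_inf_double q : tau_inf q.*2 = La.
Proof. by rewrite /tau_inf logn_coprime // coprime2n /= odd_double. Qed.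

Lemma tau_inf_doubleS q : tau_inf q.*2.+1 = rot (tau_inf q).
Proof.
rewrite /tau_inf -muln2 (_ : (q * 2).+2 = 2 * q.+1); last lia.
by rewrite lognM // iterS.
Qed.

Lemma tau_infE i : tau_inf i = if odd i then rot (tau_inf i./2) else La.
Proof.
by rewrite -{1}[i]odd_double_half; case: odd; rewrite ?tau_inf_doubleS ?tau_inf_double.
Qed.

Lemma tau_inf_neq_a i : (tau_inf i != La) = odd i.
Proof. by rewrite tau_infE; case: odd; rewrite ?rot_neq_a ?eqxx. Qed.

Lemma tau_inf_even i : ~~ odd i -> tau_inf i = La.
Proof. by move=> hi; rewrite tau_infE (negbTE hi). Qed.

Lemma tau_inf_pow2 m : tau_inf (2 ^ m).-1 = iter m rot La.
Proof. by rewrite /tau_inf prednK ?expn_gt0 // pfactorK. Qed.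

Lemma tau_inf_periodic m j : j.+1 < 2 ^ m -> tau_inf (2 ^ m + j) = tau_inf j.
Proof.
elim: m j => [|m IH] j; first by rewrite expn0.
rewrite expnS mul2n -[j]odd_double_half; case: odd => /= hj.
  by rewrite addnS -doubleD !tau_inf_doubleS IH //; lia.
by rewrite -doubleD !tau_inf_double.
Qed.

Lemma tau_inf_surj c : exists p, tau_inf p = c.
Proof. by case: c; [exists 0 | exists 1 | exists 3 | exists 7]. Qed.

Lemma tau_inf_no_zz q : tau_inf q = Lz -> tau_inf q.+2 != Lz.
Proof.
rewrite (tau_infE q) (tau_infE q.+2) /= negbK; case: ifP => // hq.
move=> /rot_eq_z hy; apply/eqP => /rot_eq_z hy'.
have o1 : odd q./2 by rewrite -tau_inf_neq_a hy; apply/eqP.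
have o2 : odd (q./2).+1 by rewrite -tau_inf_neq_a hy'; apply/eqP.
by move: o2; rewrite /= o1.
Qed.

Lemma tau_cat s1 s2 : tau (s1 ++ s2) = tau s1 ++ tau s2.
Proof. by rewrite /tau map_cat flatten_cat. Qed.

Lemma iter_tau_cat n s1 s2 : iter n tau (s1 ++ s2) = iter n tau s1 ++ iter n tau s2.
Proof. by elim: n => //= n ->; rewrite tau_cat. Qed.

Lemma tau_letter c : c != La -> tau [:: c] = [:: rot c].
Proof. by case: c; rewrite ?eqxx. Qed.

Lemma iter_rot_neq_a n c : c != La -> iter n rot c != La.
Proof. by case: n => [|n] // _; apply: rot_neq_a. Qed.

Lemma iter_tau_letter n c : c != La -> iter n tau [:: c] = [:: iter n rot c].
Proof.
by move=> hc; elim: n => //= n ->; apply: tau_letter; apply: iter_rot_neq_a.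
Qed.

Definition tau_iter_a n := iter n tau [:: La].

Lemma tau_iter_aS n : tau_iter_a n.+1 = tau_iter_a n ++ iter n.+1 rot La :: tau_iter_a n.
Proof.
rewrite /tau_iter_a iterSr (_ : tau [:: La] = [:: La] ++ [:: Lx] ++ [:: La]) //.
by rewrite !iter_tau_cat (iter_tau_letter _ (rot_neq_a La)) iterSr.
Qed.

Lemma size_tau_iter_a n : size (tau_iter_a n) = (2 ^ n.+1).-1.
Proof.
elim: n => // n IH; rewrite tau_iter_aS size_cat /= IH (expnS 2 n.+1).
by have := expn_gt0 2 n.+1; lia.
Qed.

Lemma nth_tau_iter_a n i : i < size (tau_iter_a n) -> nth La (tau_iter_a n) i = tau_inf i.
Proof.
elim: n i => [|n IH] i; first by case: i.
rewrite tau_iter_aS size_cat /= nth_cat size_tau_iter_a => hi.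
have hpos := expn_gt0 2 n.+1.
case: ltngtP => [hlt | hgt | ->]; first by rewrite IH ?size_tau_iter_a.
  rewrite -(subnSK hgt) /= IH ?size_tau_iter_a; last lia.
  by rewrite -(tau_inf_periodic (m := n.+1)); [congr tau_inf | ]; lia.
by rewrite subnn tau_inf_pow2.
Qed.

Lemma factor_of_tau_iter_a n : factor_of tau_inf (tau_iter_a n).
Proof. by exists 0 => i hi; rewrite nth_tau_iter_a. Qed.

Lemma in_Sub_tauE w : in_Sub_tau w <-> factor_of tau_inf w.
Proof.
split=> [[s [n hw]] | [p hp]].
  apply: factor_of_infix hw _.
  case: (eqVneq s La) => [-> | hs]; first exact: factor_of_tau_iter_a.
  by rewrite iter_tau_letter //; apply/factor_of_letter/tau_inf_surj.
pose n := p + size w.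
have hn : p + size w <= size (tau_iter_a n).
  rewrite size_tau_iter_a; have := ltn_expl n.+1 (isT : 1 < 2); lia.
exists La, n; apply/infixP; exists (take p (tau_iter_a n)), (drop n (tau_iter_a n)).
have hw : w = take (size w) (drop p (tau_iter_a n)).
  apply: (@eq_from_nth _ La) => [|i hi]; first by rewrite size_takel // size_drop; lia.
  by rewrite nth_take // nth_drop hp // nth_tau_iter_a //; lia.
by rewrite hw /n addnC -drop_drop !cat_take_drop.
Qed.

Lemma complexity_windows L : complexity L = #|windows_at tau_inf predT L|.
Proof.
apply: eq_card => t; rewrite !inE; apply/decPP/decPP; rewrite in_Sub_tauE.
  by case=> p hp; exists p => //; apply/windowP => i hi; apply: hp; rewrite size_tuple.
by case=> p _ /windowP hp; exists p; rewrite size_tuple.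
Qed.

Lemma card_windows_parity L : 0 < L ->
  #|windows_at tau_inf predT L| =
  #|windows_at tau_inf (predC odd) L| + #|windows_at tau_inf odd L|.
Proof.
move=> L0; rewrite -cardsUI.
have -> : windows_at tau_inf (predC odd) L :&: windows_at tau_inf odd L = set0.
  apply/setP=> t; rewrite in_setI in_set0.
  apply/negP => /andP [/windows_atP [p hp ->]].
  case/windows_atP=> q hq /eq_window /(_ 0 L0) /eqP.
  by rewrite !addn0 (tau_infE p) (tau_infE q) (negbTE hp) hq eq_sym (negbTE (rot_neq_a _)).
rewrite cards0 addn0; apply: eq_card => t; rewrite in_setU.
apply/windows_atP/orP => [[p _ ->] | [] /windows_atP [p _ ->]]; try by exists p.
by case hp: (odd p); [right | left]; apply/windows_atP; exists p; rewrite /= ?hp.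
Qed.

Lemma card_windows_even L :
  #|windows_at tau_inf (predC odd) L| = #|windows_at (rot \o tau_inf) predT L./2|.
Proof.
apply: (card_windows_at_map (h := half)
         (F := fun t => tuple_of_fun L./2 (fun j => nth La t j.*2.+1))).
- move=> p /= hp; apply/windowP => j hj.
  rewrite nth_tuple_of_fun // nth_window; last lia.
  by rewrite tau_infE oddD (negbTE hp) /= odd_double; congr (rot (tau_inf _)); lia.
- by [].
- by move=> q _; exists q.*2; rewrite /= ?odd_double ?doubleK.
move=> p q /= hp hq /eq_window h; apply/eq_window => i hi.
rewrite (tau_infE (p + i)) (tau_infE (q + i)) !oddD (negbTE hp) (negbTE hq) /=.
case: ifP => // hi2.
have -> : (p + i)./2 = p./2 + i./2 by lia.
have -> : (q + i)./2 = q./2 + i./2 by lia.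
by apply: h; lia.
Qed.

Lemma card_windows_odd L :
  #|windows_at tau_inf odd L| = #|windows_at (rot \o tau_inf) predT (uphalf L)|.
Proof.
apply: (card_windows_at_map (h := half)
         (F := fun t => tuple_of_fun (uphalf L) (fun j => nth La t j.*2))).
- move=> p /= hp; apply/windowP => j hj.
  rewrite nth_tuple_of_fun // nth_window; last lia.
  by rewrite tau_infE oddD hp odd_double; congr (rot (tau_inf _)); lia.
- by [].
- by move=> q _; exists q.*2.+1; rewrite /= ?odd_double ?uphalf_double.
move=> p q hp hq /eq_window h; apply/eq_window => i hi.
rewrite (tau_infE (p + i)) (tau_infE (q + i)) !oddD hp hq /=.
case: ifP => // hi2.
have -> : (p + i)./2 = p./2 + i./2 by lia.
have -> : (q + i)./2 = q./2 + i./2 by lia.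
by apply: h; lia.
Qed.

(* [rot] identifies only [a] and [z]: an even start reads [x] at offsets 0 and 2,
   so an odd start would need two [z]'s two apart. *)
Lemma odd_eq_of_rot_tau_inf p q :
  rot (tau_inf p) = rot (tau_inf q) -> rot (tau_inf p.+2) = rot (tau_inf q.+2) ->
  odd p = odd q.
Proof.
wlog hp : p q / ~~ odd p => [H e0 e2 | ].
  case/orP: (orbN (odd p)) => hp; last exact: H hp e0 e2.
  case/orP: (orbN (odd q)) => hq; first by rewrite hp hq.
  by symmetry; apply: H hq (esym e0) (esym e2).
rewrite (negbTE hp); case: (boolP (odd q)) => // hq.
have hz : forall i, odd i -> rot (tau_inf i) = Lx -> tau_inf i = Lz.
  by move=> i hi; apply: rot_eq_x; rewrite tau_inf_neq_a.
rewrite (tau_inf_even hp) (@tau_inf_even p.+2) /= ?negbK // => e0 e2.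
have hq0 : tau_inf q = Lz by apply: hz; rewrite // -e0.
have hq2 : tau_inf q.+2 = Lz by apply: hz; rewrite /= ?negbK // -e2.
by have := tau_inf_no_zz hq0; rewrite hq2 eqxx.
Qed.

Lemma window_rot_tau_inf_inj m p q : 3 <= m ->
  window (rot \o tau_inf) m p = window (rot \o tau_inf) m q ->
  window tau_inf m p = window tau_inf m q.
Proof.
move=> hm /eq_window h; apply/eq_window => i hi.
have hpq : odd (p + i) = odd (q + i).
  rewrite !oddD; congr addb; apply: odd_eq_of_rot_tau_inf.
    by have := h 0; rewrite !addn0; apply; lia.
  by have := h 2; rewrite !addn2; apply; lia.
case hpi: (odd (p + i)).
  by apply: rot_inj; rewrite ?tau_inf_neq_a -?hpq ?hpi //; apply: h.
by rewrite !tau_inf_even // -?hpq hpi.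
Qed.

Lemma card_windows_rot m : 3 <= m ->
  #|windows_at (rot \o tau_inf) predT m| = #|windows_at tau_inf predT m|.
Proof.
move=> hm; symmetry.
apply: (card_windows_at_map (h := id) (F := fun t => [tuple of map rot t])) => //.
- move=> p _; apply/windowP => i hi.
  by rewrite (nth_map La) ?size_tuple // nth_window.
- by move=> q _; exists q.
by move=> p q _ _; apply: window_rot_tau_inf_inj.
Qed.

(* [==] on [letter] goes through the [inord] encoding and does not compute, so
   distinctness of concrete letters is decided through [letter_index]. *)
Definition letter_index (c : letter) : nat :=
  match c with La => 0 | Lx => 1 | Ly => 2 | Lz => 3 end.

Lemma letter_eqE c d : (c == d) = (letter_index c == letter_index d).
Proof. by apply/eqP/eqP => [-> | ]; case: c; case: d. Qed.

Lemma card_windows_rot_tau_inf_1 : #|windows_at (rot \o tau_inf) predT 1| = 3.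
Proof.
have -> : windows_at (rot \o tau_inf) predT 1 = [set [tuple c] | c in (Lx |: [set Ly; Lz])].
  apply/setP=> t; apply/windows_atP/imsetP => [[p _ ->] | [c]].
    exists (rot (tau_inf p)); first by rewrite !inE !letter_eqE; case: (tau_inf p).
    by apply/esym/windowP => -[|] //=; rewrite addn0.
  rewrite !inE !letter_eqE; case: c => //= _ ->; [exists 0 | exists 1 | exists 3] => //=;
    by apply/windowP => -[|].
rewrite card_imset => [|c d /(congr1 val) [] //].
by rewrite cardsU1 cards2 !inE !letter_eqE.
Qed.

Lemma card_windows_rot_tau_inf_2 : #|windows_at (rot \o tau_inf) predT 2| = 5.
Proof.
pose pairs := (Lx, Lx) |: ((Lx, Ly) |: ((Lx, Lz) |: [set (Ly, Lx); (Lz, Lx)])).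
have -> : windows_at (rot \o tau_inf) predT 2 = [set [tuple cd.1; cd.2] | cd in pairs].
  apply/setP=> t; apply/windows_atP/imsetP => [[p _ ->] | [[c d]]].
    exists (rot (tau_inf p), rot (tau_inf p.+1)).
      rewrite (tau_infE p) (tau_infE p.+1) /=.
      by case: odd; case: (tau_inf _); rewrite !inE !xpair_eqE !letter_eqE.
    by apply/esym/windowP => -[|[|]] //= _; rewrite ?addn0 ?addn1.
  rewrite !inE !xpair_eqE !letter_eqE; case: c; case: d => //= _ ->;
    [exists 6 | exists 0 | exists 2 | exists 1 | exists 3] => //=;
    by apply/windowP => -[|[|]].
rewrite card_imset => [|[c d] [c' d'] /(congr1 val) [-> ->] //].
by rewrite /pairs !cardsU1 cards1 !inE !xpair_eqE !letter_eqE.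
Qed.

Lemma complexity_split L : 0 < L ->
  complexity L = #|windows_at (rot \o tau_inf) predT L./2| +
                 #|windows_at (rot \o tau_inf) predT (uphalf L)|.
Proof.
by move=> L0; rewrite complexity_windows card_windows_parity // card_windows_even card_windows_odd.
Qed.

Lemma complexity_half L : 6 <= L -> complexity L = complexity L./2 + complexity (uphalf L).
Proof.
move=> hL; rewrite complexity_split ?(leq_trans _ hL) //.
by rewrite !card_windows_rot -?complexity_windows //; lia.
Qed.

Lemma complexity_succ L : 6 <= L ->
  complexity L.+1 + complexity L./2 = complexity L + complexity (L./2).+1.
Proof.
move=> hL; rewrite (complexity_half (L := L.+1)) ?(complexity_half hL) /=; lia.
Qed.

Lemma complexity_3_4_5 :
  [/\ complexity 3 = 8, complexity 4 = 10 & complexity 5 = 13].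
Proof.
have C3 : complexity 3 = 8.
  by rewrite complexity_split // card_windows_rot_tau_inf_1 card_windows_rot_tau_inf_2.
split=> //; rewrite complexity_split // card_windows_rot_tau_inf_2 //.
by rewrite card_windows_rot // -complexity_windows C3.
Qed.

Theorem mainTheorem7 (n k : nat) (hn : 2 <= n) (hk : k < 2 ^ n) :
  complexity (2 ^ n + k).+1 =
    complexity (2 ^ n + k) + (if k < 2 ^ n.-1 then 3 else 2).
Proof.
have [C3 C4 C5] := complexity_3_4_5.
elim: n hn k hk => [|[|[|n]] IH] // _ k hk.
  have C6 : complexity 6 = 16 by rewrite complexity_half // C3.
  have C7 : complexity 7 = 18 by have := complexity_succ (isT : 6 <= 6); rewrite C6 C3 C4; lia.
  have C8 : complexity 8 = 20 by have := complexity_succ (isT : 6 <= 7); rewrite C7 C3 C4; lia.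
  by case: k hk => [|[|[|[|k]]]] // _; rewrite ?C4 ?C5 ?C6 ?C7 ?C8.
have hL : 6 <= 2 ^ n.+3 + k by rewrite !expnS; have := expn_gt0 2 n; lia.
have := complexity_succ hL.
have -> : (2 ^ n.+3 + k)./2 = 2 ^ n.+2 + k./2 by rewrite expnS; lia.
rewrite IH //=; last by move: hk; rewrite expnS; lia.
have -> : (k./2 < 2 ^ n.+1) = (k < 2 ^ n.+2) by rewrite [2 ^ n.+2]expnS; apply/idP/idP; lia.
lia.
Qed.
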